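(* Let $C$ be an Additive-CSP($\psi$) constraint on variables $x_1,\dots,x_k$, let $G$ be its label-extended graph and $G^0$ the label-extended graph of the homogeneous constraint $C^0$. Then: (Completeness) for each assignment $\alpha:\{x_1,\dots,x_k\}\to H$ satisfying $C$ there is an $\alpha$-permutation $f$ which is a homomorphism from $G$ to $G^0$; (Soundness) if $f$ is an $\alpha$-permutation which is a homomorphism from $G$ to $G^0$, then $\alpha$ satisfies $C$.
   Context: $H$ is a finite abelian group, $k\ge3$, and $\psi\subseteq H^k$ is a balanced pairwise independent subgroup: a proper subgroup of $H^k$ such that for $a$ uniform in $\psi$ each coordinate is uniform on $H$ and any two coordinates are independent. An Additive-CSP($\psi$) constraint $C$ on distinct variables $x_1,\dots,x_k$ (taking values in $H$) has the form $\psi(x_1+a_1,\dots,x_k+a_k)=1$ with $a_i\in H$; its homogeneous version $C^0$ is $\psi(x_1,\dots,x_k)=1$. The label-extended graph of $C$ has variable vertices $x_i\mapsto b$ for $i\in[k]$, $b\in H$, and one constraint vertex for each assignment $\beta:\{x_1,\dots,x_k\}\to H$ satisfying $C$; its only edges join each constraint vertex $\beta$ to the $k$ variable vertices $x_i\mapsto\beta(x_i)$. The label-extended graphs of $C$ and $C^0$ share the names of variable vertices. For an assignment $\alpha$, a bijection $f$ from the vertices of $G$ to the vertices of $G^0$ is an $\alpha$-permutation if $f(x_i\mapsto b)=x_i\mapsto(b-\alpha(x_i))$ for every $i\in[k]$ and $b\in H$. $f$ is a homomorphism from $G$ to $G^0$ if it maps every edge of $G$ to an edge of $G^0$. *)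

From HB Require Import structures.
From mathcomp Require Import all_boot all_order all_algebra.
Set Implicit Arguments. Unset Strict Implicit. Unset Printing Implicit Defensive.
Import GRing.Theory.
Local Open Scope ring_scope.

Definition tup (H : finZmodType) (k : nat) := {ffun 'I_k -> H}.

Section Defs.
Variables (H : finZmodType) (k : nat).

Definition is_subgroup (psi : {set tup H k}) : Prop :=
  [ffun=> 0] \in psi /\
  (forall x y, x \in psi -> y \in psi -> [ffun i => x i - y i] \in psi).

(* balanced pairwise independent subgroup: proper subgroup; for a uniform
   in psi each coordinate is uniform on H, and any two coordinates are
   independent (counting formulation of the uniform distribution on psi). *)
Definition balanced_pairwise_independent (psi : {set tup H k}) : Prop :=
  [/\ is_subgroup psi,
      psi \proper [set: tup H k],
      (forall (i : 'I_k) (b : H),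
          (#|[set x in psi | x i == b]| * #|{: H}| = #|psi|)%N) &
      (forall (i j : 'I_k), i != j -> forall (b c : H),
          (#|[set x in psi | (x i == b) && (x j == c)]| * (#|{: H}| * #|{: H}|)
             = #|psi|)%N)].

(* The constraint psi(x_1 + a_1, ..., x_k + a_k) = 1 on distinct variables
   x_1..x_k (indexed by 'I_k); an assignment is beta : 'I_k -> H. *)
Definition sat (psi : {set tup H k}) (a : tup H k) (beta : tup H k) : bool :=
  [ffun i => beta i + a i] \in psi.

(* vertices of label-extended graphs: variable vertices (x_i |-> b) = inl (i,b),
   constraint vertices = inr beta. *)
Definition vtx := (('I_k * H) + tup H k)%type.

Definition is_vertex psi a (v : vtx) : bool :=
  match v with inl _ => true | inr beta => sat psi a beta end.

Definition LEvert psi a := {v : vtx | is_vertex psi a v}.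

Definition LEedge (u v : vtx) : bool :=
  match u, v with
  | inr beta, inl (i, b) => beta i == b
  | inl (i, b), inr beta => beta i == b
  | _, _ => false
  end.

Definition alpha_perm psi a a' (alpha : tup H k)
  (f : LEvert psi a -> LEvert psi a') : Prop :=
  forall (u : LEvert psi a) (i : 'I_k) (b : H),
    val u = inl (i, b) -> val (f u) = inl (i, b - alpha i).

Definition is_hom psi a a' (f : LEvert psi a -> LEvert psi a') : Prop :=
  forall u v : LEvert psi a, LEedge (val u) (val v) -> LEedge (val (f u)) (val (f v)).

End Defs.

From mathcomp Require Import all_boot all_order all_algebra.
Local Open Scope ring_scope.
Import GRing.Theory.

Set Implicit Arguments.
Unset Strict Implicit.

(* Translating every label by -alpha maps the satisfying assignments of C onto
   those of C^0 exactly when alpha satisfies C, since psi is a subgroup; it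
   fixes variable names and preserves incidence.  Conversely, an injective
   alpha-permutation that is a homomorphism must send the constraint vertex
   -a of G to a constraint vertex of G^0, which incidence pins down as
   -a - alpha; being in psi, it gives a + alpha in psi. *)

Section Subgroup.
Variables (H : finZmodType) (k : nat) (psi : {set tup H k}).
Hypothesis psi_subgroup : is_subgroup psi.

Lemma subgroup_opp (x : tup H k) : x \in psi -> [ffun i => - x i] \in psi.
Proof.
case: psi_subgroup => psi0 psiB xpsi.
congr (_ \in psi): (psiB _ _ psi0 xpsi).
by apply/ffunP => i; rewrite !ffunE sub0r.
Qed.

Lemma subgroup_add (x y : tup H k) :
  x \in psi -> y \in psi -> [ffun i => x i + y i] \in psi.
Proof.
case: psi_subgroup => _ psiB xpsi ypsi.
congr (_ \in psi): (psiB _ _ xpsi (subgroup_opp ypsi)).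
by apply/ffunP => i; rewrite !ffunE opprK.
Qed.

Lemma sat_subr (a alpha beta : tup H k) : sat psi a alpha ->
  sat psi [ffun=> 0] [ffun i => beta i - alpha i] = sat psi a beta.
Proof.
rewrite /sat => alpha_sat; case: psi_subgroup => _ psiB.
apply/idP/idP => [shift_sat | beta_sat].
- congr (_ \in psi): (subgroup_add shift_sat alpha_sat).
  by apply/ffunP => i; rewrite !ffunE addr0 addrA subrK.
- congr (_ \in psi): (psiB _ _ beta_sat alpha_sat).
  by apply/ffunP => i; rewrite !ffunE addr0 [alpha i + _]addrC addrKA.
Qed.

End Subgroup.

Section Shift.
Variables (H : finZmodType) (k : nat).
Implicit Types (d : tup H k) (u v : vtx H k).

Definition vshift d v : vtx H k :=
  match v with
  | inl (i, b) => inl (i, b + d i)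
  | inr beta => inr [ffun i => beta i + d i]
  end.

Lemma vshiftK d : cancel (vshift d) (vshift [ffun i => - d i]).
Proof.
case=> [[i b]|beta] /=; first by rewrite ffunE addrK.
by congr inr; apply/ffunP => i; rewrite !ffunE addrK.
Qed.

Lemma vshiftNK d : cancel (vshift [ffun i => - d i]) (vshift d).
Proof.
case=> [[i b]|beta] /=; first by rewrite ffunE subrK.
by congr inr; apply/ffunP => i; rewrite !ffunE subrK.
Qed.

Lemma LEedge_vshift d u v : LEedge (vshift d u) (vshift d v) = LEedge u v.
Proof.
by case: u => [[i b]|beta]; case: v => [[j c]|gamma] //=;
  rewrite ffunE (inj_eq (addIr _)).
Qed.

Lemma is_vertex_vshift psi a alpha v : is_subgroup psi -> sat psi a alpha ->
  is_vertex psi [ffun=> 0] (vshift [ffun i => - alpha i] v) = is_vertex psi a v.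
Proof.
move=> psi_subgroup alpha_sat; case: v => [[i b]|beta] //=.
by rewrite -(sat_subr psi_subgroup beta alpha_sat); congr (sat _ _ _);
  apply/ffunP => i; rewrite !ffunE.
Qed.

End Shift.

Lemma sat_alpha_perm_hom (H : finZmodType) (k : nat) (psi : {set tup H k})
    (a alpha : tup H k) :
  is_subgroup psi -> sat psi a alpha ->
  exists f : LEvert psi a -> LEvert psi [ffun=> 0],
    [/\ bijective f, alpha_perm alpha f & is_hom f].
Proof.
move=> psi_subgroup alpha_sat.
pose nalpha : tup H k := [ffun i => - alpha i].
have fwdP v : is_vertex psi a v -> is_vertex psi [ffun=> 0] (vshift nalpha v).
  by rewrite (is_vertex_vshift _ psi_subgroup alpha_sat).
have bwdP v : is_vertex psi [ffun=> 0] v -> is_vertex psi a (vshift alpha v).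
  by rewrite -(is_vertex_vshift _ psi_subgroup alpha_sat) vshiftK.
exists (fun u => exist _ (vshift nalpha (val u)) (fwdP _ (valP u))); split.
- exists (fun u => exist _ (vshift alpha (val u)) (bwdP _ (valP u))).
  + by move=> u; apply/val_inj; rewrite /= vshiftNK.
  + by move=> u; apply/val_inj; rewrite /= vshiftK.
- by move=> u i b /= ->; rewrite /= ffunE.
- by move=> u v; rewrite /= LEedge_vshift.
Qed.

Section Soundness.
Variables (H : finZmodType) (k : nat) (psi : {set tup H k}) (a a' alpha : tup H k).
Variable f : LEvert psi a -> LEvert psi a'.
Hypothesis f_perm : alpha_perm alpha f.

Lemma alpha_perm_inr (u : LEvert psi a) beta : injective f ->
  val u = inr beta -> exists gamma, val (f u) = inr gamma.
Proof.
move=> f_inj u_beta; case fu: (val (f u)) => [[i c]|gamma]; last by exists gamma.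
pose w : LEvert psi a := exist _ (inl (i, c + alpha i)) isT.
have fw : f w = f u by apply/val_inj; rewrite (f_perm (u := w) erefl) addrK.
by move: u_beta; rewrite -(f_inj _ _ fw).
Qed.

Lemma alpha_perm_hom_inr (u : LEvert psi a) beta gamma : is_hom f ->
  val u = inr beta -> val (f u) = inr gamma -> gamma = [ffun i => beta i - alpha i].
Proof.
move=> f_hom u_beta fu_gamma; apply/ffunP => i; rewrite ffunE.
pose w : LEvert psi a := exist _ (inl (i, beta i)) isT.
have := f_hom u w; rewrite u_beta fu_gamma (f_perm (u := w) erefl) /= eqxx.
by move=> /(_ isT) /eqP.
Qed.

End Soundness.

Lemma alpha_perm_hom_sat (H : finZmodType) (k : nat) (psi : {set tup H k})
    (a alpha : tup H k) (f : LEvert psi a -> LEvert psi [ffun=> 0]) :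
  is_subgroup psi -> injective f -> alpha_perm alpha f -> is_hom f ->
  sat psi a alpha.
Proof.
move=> psi_subgroup f_inj f_perm f_hom.
have psi0 : [ffun=> 0] \in psi by case: psi_subgroup.
have na_sat : is_vertex psi a (inr [ffun i => - a i]).
  by rewrite /= /sat; congr (_ \in psi): psi0; apply/ffunP => i; rewrite !ffunE addNr.
pose u : LEvert psi a := exist _ (inr [ffun i => - a i]) na_sat.
have [gamma fu] := alpha_perm_inr f_perm f_inj (erefl : val u = _).
have gamma_sat : sat psi [ffun=> 0] gamma by have := valP (f u); rewrite fu.
rewrite /sat; congr (_ \in psi): (subgroup_opp psi_subgroup gamma_sat).
rewrite (alpha_perm_hom_inr f_perm f_hom (erefl : val u = _) fu).
by apply/ffunP => i; rewrite !ffunE addr0 opprB opprK addrC.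
Qed.

Theorem lemma7p2 (H : finZmodType) (k : nat) (hk : (3 <= k)%N)
  (psi : {set tup H k}) (hpsi : balanced_pairwise_independent psi)
  (a : tup H k) :
  (forall alpha : tup H k, sat psi a alpha ->
     exists f : LEvert psi a -> LEvert psi [ffun=> 0],
       [/\ bijective f, alpha_perm alpha f & is_hom f]) /\
  (forall (alpha : tup H k) (f : LEvert psi a -> LEvert psi [ffun=> 0]),
     bijective f -> alpha_perm alpha f -> is_hom f -> sat psi a alpha).
Proof.
have [psi_subgroup _ _ _] := hpsi.
split=> [alpha | alpha f f_bij]; first exact: sat_alpha_perm_hom.
exact/alpha_perm_hom_sat/bij_inj.
Qed.
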